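(* Let $X$ and $X^n$, $n\ge1$, be stochastic processes with sample paths in $D_{\mathbb{R}}[0,1]$. Assume that each $X^n$ is constant on each of the intervals $[0,2^{-n}),[2^{-n},2\cdot2^{-n}),\dots,[(2^n-1)2^{-n},1)$ and that $$\max_{d\in\mathcal{D}_n}|X^n_d-X_d|\to0\quad\text{almost surely as }n\to\infty,$$ where $\mathcal{D}_n=\{0,2^{-n},\dots,(2^n-1)2^{-n},1\}$. Then $X^n\to X$ almost surely in Skorokhod's $J_1$ topology.
   Context: $D_{\mathbb{R}}[0,1]$ is the space of real-valued càdlàg functions on $[0,1]$. Skorokhod's $J_1$ topology is induced by $d_{J_1}(x,y)=\inf_{\lambda\in\Lambda}\big(\sup_{t\in[0,1]}|\lambda(t)-t|+\sup_{t\in[0,1]}|x(\lambda(t))-y(t)|\big)$, where $\Lambda$ is the set of all increasing homeomorphisms $\lambda:[0,1]\to[0,1]$. *)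

From HB Require Import structures.
From mathcomp Require Import all_boot all_order all_algebra.
From mathcomp Require Import all_classical all_reals all_analysis.
Set Implicit Arguments. Unset Strict Implicit. Unset Printing Implicit Defensive.
Import Order.TTheory GRing.Theory Num.Theory.
Import numFieldNormedType.Exports.
Local Open Scope classical_set_scope.
Local Open Scope ring_scope.

(* A path x : R -> R is considered only on [0,1]. *)
Definition cadlag01 {R : realType} (x : R -> R) : Prop :=
  (forall t, 0 <= t < 1 -> x @ at_right t --> x t) /\
  (forall t, 0 < t <= 1 -> cvg (x @ at_left t)).

Definition incr_homeo01 {R : realType} (lam : R -> R) : Prop :=
  [/\ (forall t, 0 <= t <= 1 -> 0 <= lam t <= 1),
      {within `[0, 1]%classic, continuous lam},
      (forall s t, 0 <= s <= 1 -> 0 <= t <= 1 -> s < t -> lam s < lam t) &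
      exists mu : R -> R,
        [/\ (forall t, 0 <= t <= 1 -> 0 <= mu t <= 1),
            {within `[0, 1]%classic, continuous mu},
            (forall t, 0 <= t <= 1 -> mu (lam t) = t) &
            (forall t, 0 <= t <= 1 -> lam (mu t) = t)]].

Definition dJ1 {R : realType} (x y : R -> R) : \bar R :=
  ereal_inf [set (ereal_sup [set (`|lam t - t|)%:E | t in (`[0%R, 1%R]%classic : set R)]
                  + ereal_sup [set (`|x (lam t) - y t|)%:E | t in (`[0%R, 1%R]%classic : set R)])%E
            | lam in [set lam : R -> R | incr_homeo01 lam]].

Definition dyadic_max {R : realType} (n : nat) (f : R -> R) : R :=
  \big[Order.max/0]_(k < (2 ^ n).+1) `|f (k%:R / 2%:R ^+ n)|.

(* Since [x] is cadlag, [[0, 1]] splits into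
   finitely many intervals [[a_i, a_(i+1))] on each of which [x] oscillates by
   at most [eps].  Once [2^-n] is below the smallest gap, rounding every [a_i]
   up to the dyadic grid [D_n] gives a new subdivision [c_i], and the piecewise
   linear homeomorphism [lam] with [lam a_i = c_i] moves points by less than
   [2^-n].  For [t] in [[a_i, a_(i+1))], [lam t] lies in [[c_i, c_(i+1))], so
   the grid point [d] just below [lam t] lies in [[a_i, a_(i+1))] again; as
   [x_n] is constant between grid points,
   [|x_n (lam t) - x t| <= |x_n d - x d| + |x d - x t| <= max_(D_n) |x_n - x| + eps].
   Hence [dJ1 x_n x <= 2^-n + max_(D_n) |x_n - x| + eps], path by path. *)

From HB Require Import structures.
From mathcomp Require Import all_boot all_order all_algebra.
From mathcomp Require Import all_classical all_reals all_analysis.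
From mathcomp Require Import ring lra.
Import Order.TTheory GRing.Theory Num.Theory.
Import numFieldNormedType.Exports.
Local Open Scope classical_set_scope.
Local Open Scope ring_scope.

Section Skorokhod.
Set Implicit Arguments. Unset Strict Implicit.
Variable R : realType.
Implicit Types (a c : nat -> R) (m n : nat) (u v w : R).

Definition incr_upto m a := forall i, (i < m)%N -> a i < a i.+1.

Definition subdivision (s : R) m a := [/\ a 0%N = 0, a m = s & incr_upto m a].

Lemma incr_upto_le m a i j : incr_upto m a -> (i <= j <= m)%N -> a i <= a j.
Proof.
move=> ha /andP[]; elim: j => [|j IH]; first by rewrite leqn0 => /eqP->.
rewrite leq_eqVlt => /orP[/eqP-> //|hij] hj.
exact: le_trans (IH hij (ltnW hj)) (ltW (ha _ hj)).
Qed.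

Lemma subdivision_gt0 m a : subdivision 1 m a -> (0 < m)%N.
Proof. by case: m => // -[-> /eqP]; rewrite eq_sym oner_eq0. Qed.

Lemma subdivision_itv m a i : subdivision 1 m a -> (i <= m)%N -> 0 <= a i <= 1.
Proof.
by case=> a0 am ha hi; rewrite -{1}a0 -am !(incr_upto_le ha) ?leq0n ?leqnn ?hi.
Qed.

Lemma subdivision_cover m a t : subdivision 1 m a -> 0 <= t < 1 ->
  exists j, [/\ (j < m)%N, a j <= t & t < a j.+1].
Proof.
move=> sa /andP[t0 t1]; have m0 := subdivision_gt0 sa; case: sa => a0 am _.
have ex : exists j, t < a j.+1 by exists m.-1; rewrite prednK // am.
case: (ex_minnP ex) => j hj hmin; exists j; split => //.
  have := hmin m.-1; rewrite prednK // am => /(_ t1) h.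
  by rewrite -(prednK m0) ltnS.
case: j hj hmin => [|j] hj hmin; first by rewrite a0.
by rewrite leNgt; apply/negP => /hmin; rewrite ltnn.
Qed.

Lemma subdivision_cover_closed m a t : subdivision 1 m a -> 0 <= t <= 1 ->
  exists j, [/\ (j < m)%N, a j <= t & t <= a j.+1].
Proof.
move=> sa /andP[t0 t1]; case: (ltrP t 1) => ht.
  have [|j [hj h1 h2]] := subdivision_cover (t := t) sa; first by rewrite t0.
  by exists j; split => //; apply: ltW.
have m0 := subdivision_gt0 sa; case: sa => _ am ha.
exists m.-1; rewrite prednK // am; split => //.
by apply: le_trans ht; rewrite -am (incr_upto_le ha) // leq_pred leqnn.
Qed.

Lemma incr_upto_min_gap m a : incr_upto m a ->
  exists2 g, 0 < g & forall i, (i < m)%N -> g <= a i.+1 - a i.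
Proof.
elim: m => [|m IH] ha; first by exists 1.
have [|g g0 hg] := IH; first by move=> i hi; apply/ha/ltnW.
exists (Order.min g (a m.+1 - a m)); first by rewrite lt_min g0 subr_gt0 ha.
move=> i; rewrite ltnS leq_eqVlt => /orP[/eqP->|hi]; first by rewrite ge_min lexx orbT.
by rewrite ge_min hg.
Qed.

Definition clamp01 (u : R) : R := Order.min 1 (Order.max 0 u).

Lemma clamp01_id u : 0 <= u <= 1 -> clamp01 u = u.
Proof. by case/andP=> h0 h1; rewrite /clamp01 (max_r h0) (min_r h1). Qed.

Lemma clamp01_ge1 u : 1 <= u -> clamp01 u = 1.
Proof. by move=> h; rewrite /clamp01 max_r ?(le_trans _ h) // min_l. Qed.

Lemma clamp01_le0 u : u <= 0 -> clamp01 u = 0.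
Proof. by move=> h; rewrite /clamp01 (max_l h) min_r. Qed.

Lemma clamp01_le u v : u <= v -> clamp01 u <= clamp01 v.
Proof.
move=> h; rewrite /clamp01 le_min !ge_min lexx /=; apply/orP; right.
by rewrite ge_max !le_max lexx /= h !orbT.
Qed.

Lemma continuous_clamp01 : continuous clamp01.
Proof.
have -> : clamp01 = cst 1 \min (cst 0 \max id) by [].
by apply: min_fun_continuous; [exact: cst_continuous|
  apply: max_fun_continuous; [exact: cst_continuous|by move=> ?; exact: cvg_id]].
Qed.

Lemma continuous_sum_ord (F : nat -> R -> R) n : (forall i, continuous (F i)) ->
  continuous (fun t => \sum_(i < n) F i t).
Proof.
move=> hF; elim: n => [|n IH].
  under eq_fun do rewrite big_ord0; exact: cst_continuous.
under eq_fun do rewrite big_ord_recr /=.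
by move=> x; apply: cvgD; [exact: IH | exact: hF].
Qed.

(* Piecewise linear with [a i |-> c i]; as a sum of clamped ramps it is
   continuous everywhere without any case analysis. *)
Definition pl_interp m a c (t : R) : R :=
  c 0%N + \sum_(i < m) (c i.+1 - c i) * clamp01 ((t - a i) / (a i.+1 - a i)).

Lemma pl_interpE m a c j t : incr_upto m a -> (j < m)%N -> a j <= t <= a j.+1 ->
  pl_interp m a c t = c j + (c j.+1 - c j) * ((t - a j) / (a j.+1 - a j)).
Proof.
move=> ha hj /andP[h1 h2].
have gap i : (i < m)%N -> 0 < a i.+1 - a i by move=> hi; rewrite subr_gt0 ha.
rewrite /pl_interp -(big_mkord xpredT
  (fun i => (c i.+1 - c i) * clamp01 ((t - a i) / (a i.+1 - a i)))).
rewrite (@big_cat_nat _ _ _ j) ?(ltnW hj) //= (big_ltn hj) /=.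
rewrite (eq_big_nat _ _ (F2 := fun i => c i.+1 - c i)); last first.
  move=> i /andP[_ hi]; have hi' := ltn_trans hi hj.
  rewrite clamp01_ge1 ?mulr1 // ler_pdivlMr ?gap // mul1r lerD2r.
  by apply: le_trans h1; rewrite (incr_upto_le ha) // hi (ltnW hj).
rewrite telescope_sumr // (eq_big_nat _ _ (F2 := fun i => 0)); last first.
  move=> i /andP[hi1 hi2]; rewrite clamp01_le0 ?mulr0 //.
  rewrite pmulr_lle0 ?invr_gt0 ?gap // subr_le0.
  by apply: le_trans h2 _; rewrite (incr_upto_le ha) // hi1 (ltnW hi2).
rewrite big1 // addr0 clamp01_id; first by rewrite addrA [c 0%N + _]addrC subrK.
apply/andP; split; first by apply: divr_ge0; [rewrite subr_ge0|exact/ltW/gap].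
by rewrite ler_pdivrMr ?gap // mul1r lerD2r.
Qed.

Lemma continuous_pl_interp m a c : continuous (pl_interp m a c).
Proof.
move=> x; apply: cvgD; first exact: cvg_cst.
apply: (@continuous_sum_ord
  (fun i t => (c i.+1 - c i) * clamp01 ((t - a i) / (a i.+1 - a i))) m) => i y.
apply: cvgM; first exact: cvg_cst.
apply: (@continuous_comp _ _ _ (fun t => (t - a i) / (a i.+1 - a i)) clamp01);
  last exact: continuous_clamp01.
by apply: cvgM; [apply: cvgB; [exact: cvg_id|exact: cvg_cst]|exact: cvg_cst].
Qed.

Lemma pl_interp_le m a c s t : incr_upto m a -> incr_upto m c -> s <= t ->
  pl_interp m a c s <= pl_interp m a c t.
Proof.
move=> ha hc st; rewrite /pl_interp lerD2l; apply: ler_sum => i _.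
apply: ler_wpM2l; first by rewrite subr_ge0 ltW ?hc.
by apply: clamp01_le; rewrite ler_pM2r ?invr_gt0 ?subr_gt0 ?ha // lerD2r.
Qed.

Lemma pl_interp_node m a c j : subdivision 1 m a -> (j <= m)%N ->
  pl_interp m a c (a j) = c j.
Proof.
move=> sa hjm; have m0 := subdivision_gt0 sa; case: sa => _ _ ha.
case: (ltnP j m) => hj; last first.
  have -> : j = m by apply/eqP; rewrite eqn_leq hjm hj.
  have hm1 : (m.-1 < m)%N by rewrite prednK.
  rewrite (pl_interpE c ha hm1) prednK //; last first.
    by rewrite lexx andbT (incr_upto_le ha) // leq_pred leqnn.
  have gap : a m.-1 < a m by have := ha _ hm1; rewrite prednK.
  by rewrite divff ?subr_eq0 ?gt_eqF // mulr1 addrC subrK.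
rewrite (pl_interpE c ha hj) ?lexx ?ltW ?ha //.
by rewrite subrr mul0r mulr0 addr0.
Qed.

Lemma pl_interp_lt m a c s t : subdivision 1 m a -> incr_upto m c ->
  0 <= s -> t <= 1 -> s < t -> pl_interp m a c s < pl_interp m a c t.
Proof.
move=> sa hc s0 t1 st.
have [|j [hj h1 h2]] := subdivision_cover sa (t := s).
  by rewrite s0 (lt_le_trans st t1).
case: sa => _ _ ha; set r := Order.min t (a j.+1).
have sr : s < r by rewrite lt_min st h2.
have r2 : r <= a j.+1 by rewrite ge_min lexx orbT.
apply: lt_le_trans (pl_interp_le ha hc (_ : r <= t)); last by rewrite ge_min lexx.
rewrite (pl_interpE c ha hj) ?h1 ?(ltW h2) // (pl_interpE c ha hj); last first.
  by rewrite r2 (le_trans h1 (ltW sr)).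
rewrite ltrD2l ltr_pM2l ?subr_gt0 ?hc // ltr_pM2r ?invr_gt0 ?subr_gt0 ?ha //.
by rewrite ltrD2r.
Qed.

Lemma pl_interp_itv m a c t : subdivision 1 m a -> subdivision 1 m c ->
  0 <= t <= 1 -> 0 <= pl_interp m a c t <= 1.
Proof.
move=> sa [c0 cm hc] /andP[t0 t1]; have [a0 am ha] := sa.
have e0 := pl_interp_node c sa (leq0n m); rewrite a0 c0 in e0.
have e1 := pl_interp_node c sa (leqnn m); rewrite am cm in e1.
by apply/andP; split; [rewrite -e0|rewrite -e1]; apply: pl_interp_le.
Qed.

Lemma pl_interpK m a c t : subdivision 1 m a -> subdivision 1 m c ->
  0 <= t <= 1 -> pl_interp m c a (pl_interp m a c t) = t.
Proof.
move=> sa [_ _ hc] ht; have [j [hj h1 h2]] := subdivision_cover_closed sa ht.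
case: sa => _ _ ha.
have ga : 0 < a j.+1 - a j by rewrite subr_gt0 ha.
have gc : 0 < c j.+1 - c j by rewrite subr_gt0 hc.
have th0 : 0 <= (t - a j) / (a j.+1 - a j).
  by apply: divr_ge0; [rewrite subr_ge0|exact: ltW].
have th1 : (t - a j) / (a j.+1 - a j) <= 1 by rewrite ler_pdivrMr // mul1r lerD2r.
rewrite (pl_interpE c ha hj) ?h1 ?h2 // (pl_interpE a hc hj).
  by field; rewrite (gt_eqF gc) (gt_eqF ga).
rewrite lerDl mulr_ge0 ?(ltW gc) //= -lerBrDl -[X in _ <= X]mulr1.
by rewrite ler_wpM2l // ltW.
Qed.

Lemma pl_interp_homeo m a c : subdivision 1 m a -> subdivision 1 m c ->
  incr_homeo01 (pl_interp m a c).
Proof.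
move=> sa sc; have [_ _ hc] := sc; split.
- by move=> t; apply: pl_interp_itv.
- exact/continuous_subspaceT/continuous_pl_interp.
- by move=> s t /andP[s0 _] /andP[_ t1]; apply: pl_interp_lt.
exists (pl_interp m c a); split.
- by move=> t; apply: pl_interp_itv.
- exact/continuous_subspaceT/continuous_pl_interp.
- by move=> t; apply: pl_interpK.
- by move=> t; apply: pl_interpK.
Qed.

Lemma lerp_dist_le (x0 x1 y0 y1 th del : R) : 0 <= th <= 1 ->
  `|y0 - x0| <= del -> `|y1 - x1| <= del ->
  `|(y0 + (y1 - y0) * th) - (x0 + (x1 - x0) * th)| <= del.
Proof.
move=> /andP[th0 th1] h0 h1.
have -> : (y0 + (y1 - y0) * th) - (x0 + (x1 - x0) * th) =
          (y0 - x0) * (1 - th) + (y1 - x1) * th by ring.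
apply: le_trans (ler_normD _ _) _.
rewrite !normrM (ger0_norm th0) [`|1 - th|]ger0_norm ?subr_ge0 //.
have -> : del = del * (1 - th) + del * th by ring.
by apply: lerD; apply: ler_pM => //; rewrite ?subr_ge0.
Qed.

Lemma pl_interp_dist m a c t del : subdivision 1 m a ->
  (forall i, (i <= m)%N -> `|c i - a i| <= del) ->
  0 <= t <= 1 -> `|pl_interp m a c t - t| <= del.
Proof.
move=> sa hd ht; have [j [hj h1 h2]] := subdivision_cover_closed sa ht.
case: sa => _ _ ha; have ga : 0 < a j.+1 - a j by rewrite subr_gt0 ha.
have et : t = a j + (a j.+1 - a j) * ((t - a j) / (a j.+1 - a j)).
  by field; rewrite (gt_eqF ga).
rewrite (pl_interpE c ha hj) ?h1 ?h2 // [X in `|_ - X|]et.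
apply: lerp_dist_le; [|exact: hd (ltnW hj)|exact: hd hj].
apply/andP; split; first by apply: divr_ge0; [rewrite subr_ge0|exact: ltW].
by rewrite ler_pdivrMr // mul1r lerD2r.
Qed.

Lemma at_left_itv (s : R) (P : R -> Prop) : (\forall u \near s^'-, P u) ->
  exists2 e, 0 < e & forall u, s - e < u < s -> P u.
Proof.
move=> /nbhs_ballP[e e0 H]; exists e => // u /andP[h1 h2]; apply: H => //.
by rewrite /ball /= ltr_norml; apply/andP; split; lra.
Qed.

Lemma at_right_itv (s : R) (P : R -> Prop) : (\forall u \near s^'+, P u) ->
  exists2 e, 0 < e & forall u, s < u < s + e -> P u.
Proof.
move=> /nbhs_ballP[e e0 H]; exists e => // u /andP[h1 h2]; apply: H => //.
by rewrite /ball /= ltr_norml; apply/andP; split; lra.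
Qed.

Section FineSubdivision.
Variables (x : R -> R) (eps : R).

Definition osc_le (u v : R) : Prop :=
  forall s t, u <= s < v -> u <= t < v -> `|x s - x t| <= eps.

Definition fine_subdivision (s : R) (m : nat) (a : nat -> R) : Prop :=
  subdivision s m a /\ forall i, (i < m)%N -> osc_le (a i) (a i.+1).

Definition fine_reachable (s : R) : Prop := exists m a, fine_subdivision s m a.

Lemma fine_reachable0 : fine_reachable 0.
Proof. by exists 0%N, (fun _ => 0); split. Qed.

Lemma fine_reachable_extend s s' : fine_reachable s -> s < s' -> osc_le s s' ->
  fine_reachable s'.
Proof.
move=> [m [a [[a0 am ha] hx]]] ss' hs.
exists m.+1, (fun i => if (i <= m)%N then a i else s'); split; first split => //.
- by rewrite ltnn.
- move=> i; rewrite ltnS => hi; rewrite hi.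
  case: (ltnP i m) => him; first exact: ha.
  have -> : i = m by apply/eqP; rewrite eqn_leq hi him.
  by rewrite am.
- move=> i; rewrite ltnS => hi; rewrite hi.
  case: (ltnP i m) => him; first exact: hx.
  have -> : i = m by apply/eqP; rewrite eqn_leq hi him.
  by rewrite am.
Qed.

Lemma osc_le_ball L u v : (forall r, u <= r < v -> `|L - x r| < eps / 2) ->
  osc_le u v.
Proof.
move=> hL s t hs ht; have -> : x s - x t = (L - x t) - (L - x s) by ring.
apply: le_trans (ler_normB _ _) _.
by rewrite [eps]splitr; apply/ltW/ltrD; apply: hL.
Qed.

Hypothesis eps_gt0 : 0 < eps.

Let eps2_gt0 : 0 < eps / 2. Proof. by rewrite divr_gt0. Qed.

Lemma fine_reachable_left s : cvg (x @ s^'-) ->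
  (forall e, 0 < e -> exists2 r, s - e < r <= s & fine_reachable r) ->
  fine_reachable s.
Proof.
move=> /cvg_ex[L /cvgrPdist_lt /(_ _ eps2_gt0) /at_left_itv[eta eta0 hL]] hS.
have [r /andP[sr rs] hr] := hS eta eta0.
have [<- //|rs'] := eqVneq r s.
apply: (fine_reachable_extend hr); first by rewrite lt_neqAle rs' rs.
by apply: (osc_le_ball (L := L)) => u /andP[ru us]; apply: hL; rewrite us andbT; lra.
Qed.

Lemma fine_reachable_right s b : x @ s^'+ --> x s -> fine_reachable s -> s < b ->
  exists2 s', s < s' <= b & fine_reachable s'.
Proof.
move=> /cvgrPdist_lt /(_ _ eps2_gt0) /at_right_itv[eta eta0 hR] hs sb.
pose s' := Order.min (s + eta / 2) b.
have ss' : s < s' by rewrite lt_min sb ltrDl divr_gt0.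
have s'le : s' <= s + eta / 2 by rewrite ge_min lexx.
exists s'; first by rewrite ss' ge_min lexx orbT.
apply: (fine_reachable_extend hs ss'); apply: (osc_le_ball (L := x s)).
move=> u /andP[su us']; have [->|neq] := eqVneq u s; first by rewrite subrr normr0.
by apply: hR; rewrite lt_neqAle eq_sym neq su /=; lra.
Qed.

(* The supremum of the reachable points is reachable thanks to the left limit
   there, and it cannot lie below 1 by right continuity. *)
Lemma cadlag01_fine_subdivision : cadlag01 x -> exists m a, fine_subdivision 1 m a.
Proof.
move=> [xr xl]; pose S := [set s | 0 <= s <= 1 /\ fine_reachable s].
have S0 : S 0 by split; [rewrite lexx ler01|exact: fine_reachable0].
have hS : has_sup S by split; [exists 0|exists 1 => s [/andP[]]].
have sg0 : 0 <= sup S by apply: sup_upper_bound.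
have sg1 : sup S <= 1 by apply: ge_sup; [exists 0|move=> s [/andP[]]].
have reach_sg : fine_reachable (sup S).
  have [->|sgp] := eqVneq (sup S) 0; first exact: fine_reachable0.
  apply: fine_reachable_left; first by apply: xl; rewrite lt0r sgp sg0 sg1.
  move=> e e0; have [r hr sr] := sup_adherent e0 hS.
  by exists r; [rewrite sr /=; apply: sup_upper_bound|case: hr].
suff <- : sup S = 1 by [].
apply/eqP; rewrite eq_le sg1 leNgt; apply/negP => sglt.
have sg01 : 0 <= sup S < 1 by rewrite sg0 sglt.
have [s' /andP[sgs' s'1] hs'] := fine_reachable_right (xr _ sg01) reach_sg sglt.
have : sup S >= s'.
  by apply: sup_upper_bound => //; split; rewrite // s'1 andbT; lra.
by rewrite leNgt sgs'.
Qed.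

End FineSubdivision.

Lemma pow2n_gt0 n : 0 < 2%:R ^+ n :> R.
Proof. by rewrite exprn_gt0 // ltr0n. Qed.

Lemma dyadic_max_ge n (f : R -> R) k : (k <= 2 ^ n)%N ->
  `|f (k%:R / 2%:R ^+ n)| <= dyadic_max n f.
Proof.
move=> hk; have hk' : (k < (2 ^ n).+1)%N by [].
exact: (le_bigmax _ (fun k : 'I_(2 ^ n).+1 => `|f (k%:R / 2%:R ^+ n)|) (Ordinal hk')).
Qed.

(* Junk for [u <= -1], where the absolute value flips the sign. *)
Definition ceiln u : nat := `|Num.ceil u|%N.

Lemma ceiln_itv u : 0 <= u -> u <= (ceiln u)%:R < u + 1.
Proof.
move=> u0; have /andP[h1 h2] := ceil_itv u.
rewrite /ceiln natr_absz ger0_norm ?ceil_ge0 ?(lt_le_trans _ u0) ?ltrN10 // h2 /=.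
by move: h1; rewrite rmorphB /=; lra.
Qed.

Lemma ceiln_nat k : ceiln k%:R = k.
Proof. by rewrite /ceiln -[k%:R]/((k%:Z)%:~R : R) intrKceil. Qed.

Definition dyadic_floor n w : R := (Num.truncn (w * 2%:R ^+ n))%:R / 2%:R ^+ n.
Definition dyadic_ceil n u : R := (ceiln (u * 2%:R ^+ n))%:R / 2%:R ^+ n.

Lemma dyadic_ceil_itv n u : 0 <= u -> u <= dyadic_ceil n u < u + (2%:R ^+ n)^-1.
Proof.
move=> u0; have p0 := pow2n_gt0 n.
have /andP[h1 h2] := ceiln_itv (mulr_ge0 u0 (ltW p0)).
rewrite ler_pdivlMr // h1 /= ltr_pdivrMr // mulrDl mulVf ?gt_eqF //.
Qed.

Lemma truncn_lt_pow2 n w : 0 <= w < 1 -> (Num.truncn (w * 2%:R ^+ n) < 2 ^ n)%N.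
Proof.
move=> /andP[w0 w1]; have p0 := pow2n_gt0 n.
by rewrite truncn_lt_nat ?mulr_ge0 ?(ltW p0) // natrX -[X in _ < X]mul1r ltr_pM2r.
Qed.

Lemma dyadic_floor_mem n u v w : 0 <= u -> 0 <= v ->
  dyadic_ceil n u <= w < dyadic_ceil n v -> u <= dyadic_floor n w < v.
Proof.
move=> u0 v0 /andP[uw wv]; have p0 := pow2n_gt0 n.
have [uc _] := andP (dyadic_ceil_itv n u0).
have w0 : 0 <= w * 2%:R ^+ n.
  by rewrite mulr_ge0 ?(ltW p0) ?(le_trans u0 (le_trans uc uw)).
have lo : (ceiln (u * 2%:R ^+ n) <= Num.truncn (w * 2%:R ^+ n))%N.
  by rewrite truncn_ge_nat // -ler_pdivrMr.
have hi : (Num.truncn (w * 2%:R ^+ n) < ceiln (v * 2%:R ^+ n))%N.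
  by rewrite truncn_lt_nat // -ltr_pdivlMr.
apply/andP; split.
  by apply: le_trans uc _; rewrite ler_pM2r ?invr_gt0 // ler_nat.
have := ceiln_itv (mulr_ge0 v0 (ltW p0)); case/andP=> _ hv.
rewrite /dyadic_floor ltr_pdivrMr //.
have : ((Num.truncn (w * 2%:R ^+ n)).+1%:R : R) <= (ceiln (v * 2%:R ^+ n))%:R.
  by rewrite ler_nat.
by rewrite -natr1; lra.
Qed.

Definition dyadic_step n (y : R -> R) : Prop :=
  forall k, (k < 2 ^ n)%N -> forall s t,
    k%:R / 2%:R ^+ n <= s < k.+1%:R / 2%:R ^+ n ->
    k%:R / 2%:R ^+ n <= t < k.+1%:R / 2%:R ^+ n -> y s = y t.

Lemma dyadic_step_floor n y w : dyadic_step n y -> 0 <= w < 1 ->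
  y (dyadic_floor n w) = y w.
Proof.
move=> hy hw; have p0 := pow2n_gt0 n; have [w0 _] := andP hw.
apply: (hy _ (truncn_lt_pow2 n hw)).
  by rewrite /dyadic_floor lexx /= ltr_pM2r ?ltr_nat // invr_gt0.
have /andP[h1 h2] := truncn_itv (mulr_ge0 w0 (ltW p0)).
by rewrite ler_pdivrMr // h1 ltr_pdivlMr.
Qed.

Lemma subdivision_dyadic_ceil n m a : subdivision 1 m a ->
  (forall i, (i < m)%N -> (2%:R ^+ n)^-1 < a i.+1 - a i) ->
  subdivision 1 m (fun i => dyadic_ceil n (a i)).
Proof.
move=> sa hgap; have p0 := pow2n_gt0 n; have [a0 am ha] := sa.
split.
- by rewrite a0 /dyadic_ceil mul0r (ceiln_nat 0) mul0r.
- by rewrite am /dyadic_ceil mul1r -natrX ceiln_nat divff // pnatr_eq0 expn_eq0.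
move=> i hi; have /andP[ai0 _] := subdivision_itv sa (ltnW hi).
have /andP[ai1 _] := subdivision_itv sa hi.
have /andP[_ ci] := dyadic_ceil_itv n ai0; have /andP[ci1 _] := dyadic_ceil_itv n ai1.
by have := hgap i hi; lra.
Qed.

Lemma dJ1_le (y x lam : R -> R) (A B : R) : incr_homeo01 lam ->
  (forall t, 0 <= t <= 1 -> `|lam t - t| <= A) ->
  (forall t, 0 <= t <= 1 -> `|y (lam t) - x t| <= B) ->
  (dJ1 y x <= (A + B)%:E)%E.
Proof.
move=> hlam hA hB; apply: le_trans; first by apply: ereal_inf_lbound; exists lam.
rewrite EFinD; apply: leeD; apply: ge_ereal_sup => _ [t ht <-]; rewrite lee_fin.
  by apply: hA; move: ht; rewrite /= in_itv.
by apply: hB; move: ht; rewrite /= in_itv.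
Qed.

Section DyadicInterpolation.
Variables (x y : R -> R) (n : nat) (eps : R) (m : nat) (a : nat -> R).
Hypotheses (y_step : dyadic_step n y) (eps_ge0 : 0 <= eps)
  (fine_a : fine_subdivision x eps 1 m a)
  (gap_a : forall i, (i < m)%N -> (2%:R ^+ n)^-1 < a i.+1 - a i).

Let c i := dyadic_ceil n (a i).
Let lam := pl_interp m a c.
Let del := dyadic_max n (fun u => y u - x u).

Lemma dyadic_interp_dist t : 0 <= t <= 1 -> `|y (lam t) - x t| <= del + eps.
Proof.
move=> /andP[t0 t1]; have [sa osc_a] := fine_a.
have sc : subdivision 1 m c by apply: subdivision_dyadic_ceil.
have p0 := pow2n_gt0 n.
have [t_lt1|t_eq1] := ltrP t 1; last first.
  have -> : t = 1 by apply/eqP; rewrite eq_le t1.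
  have [_ am _] := sa; have [_ cm _] := sc.
  rewrite /lam -{1}am pl_interp_node // cm.
  have := dyadic_max_ge (fun u => y u - x u) (leqnn (2 ^ n)).
  by rewrite /del -natrX divff ?gt_eqF // => h; apply: le_trans h _; rewrite lerDl.
have [|i [hi ait tai]] := subdivision_cover (t := t) sa; first by rewrite t0.
have /andP[ai0 _] := subdivision_itv sa (ltnW hi).
have /andP[ai1 ai11] := subdivision_itv sa hi.
have [[_ _ ha] [_ _ hc]] := (sa, sc).
have cl : c i <= lam t.
  by rewrite /lam -(pl_interp_node c sa (ltnW hi)); apply: pl_interp_le.
have cr : lam t < c i.+1.
  by rewrite /lam -(pl_interp_node c sa hi); apply: pl_interp_lt.
have lam01 : 0 <= lam t < 1.
  have /andP[ci0 _] := subdivision_itv sc (ltnW hi).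
  have /andP[_ ci1] := subdivision_itv sc hi.
  by rewrite (le_trans ci0 cl) (lt_le_trans cr ci1).
have /andP[ad da] : a i <= dyadic_floor n (lam t) < a i.+1.
  by apply: dyadic_floor_mem; rewrite // cl cr.
rewrite -(dyadic_step_floor y_step lam01).
set d := dyadic_floor n (lam t).
have -> : y d - x t = (y d - x d) + (x d - x t) by ring.
apply: le_trans (ler_normD _ _) (lerD _ _).
  exact: (dyadic_max_ge (fun u => y u - x u) (ltnW (truncn_lt_pow2 n lam01))).
by apply: (osc_a i hi); rewrite ?ad ?da ?ait ?tai.
Qed.

Lemma dJ1_le_dyadic : (dJ1 y x <= ((2%:R ^+ n)^-1 + (del + eps))%:E)%E.
Proof.
have [sa _] := fine_a; have sc := subdivision_dyadic_ceil sa gap_a.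
apply: (dJ1_le (pl_interp_homeo sa sc)); last exact: dyadic_interp_dist.
move=> t ht; apply: (pl_interp_dist sa _ ht) => i hi.
have /andP[ai0 _] := subdivision_itv sa hi.
have /andP[h1 h2] := dyadic_ceil_itv n ai0.
by rewrite ger0_norm ?subr_ge0 //; lra.
Qed.

End DyadicInterpolation.

Lemma cvge0_nng_le (T : Type) (F : set_system T) {FF : ProperFilter F}
    (f : T -> \bar R) :
  (forall t, (0 <= f t)%E) ->
  (forall e, 0 < e -> \forall t \near F, (f t <= e%:E)%E) -> f @ F --> 0%E.
Proof.
move=> f0 fe.
have ffin : \forall t \near F, f t \is a fin_num.
  by apply: filterS (fe 1 ltr01) => t ft; rewrite ge0_fin_numE ?(le_lt_trans ft) ?ltey.
apply: cvg_EFin => //; apply/cvgrPdist_le => e e0.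
apply: filterS2 ffin (fe e e0) => t ft fte.
by rewrite sub0r normrN ger0_norm ?fine_ge0 // -lee_fin fineK.
Qed.

Lemma dJ1_ge0 (y x : R -> R) : (0 <= dJ1 y x)%E.
Proof.
have i0 : `[0, 1]%classic (0 : R) by rewrite /= in_itv /= lexx ler01.
apply: le_ereal_inf_tmp => _ [lam _ <-].
apply: adde_ge0; apply: le_ereal_sup_tmp.
  by exists (`|lam 0 - 0|)%:E; [exists 0|rewrite lee_fin].
by exists (`|y (lam 0) - x 0|)%:E; [exists 0|rewrite lee_fin].
Qed.

Lemma dJ1_cvg0_dyadic (x : R -> R) (y : nat -> R -> R) : cadlag01 x ->
  (forall n, (0 < n)%N -> dyadic_step n (y n)) ->
  (fun n => dyadic_max n (fun u => y n u - x u)) @ \oo --> 0 ->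
  (fun n => dJ1 (y n) x) @ \oo --> 0%E.
Proof.
move=> hx hy hmax; apply: cvge0_nng_le => [n|e e0]; first exact: dJ1_ge0.
have e3 : 0 < e / 3%:R by rewrite divr_gt0.
have [m [a fine_a]] := cadlag01_fine_subdivision e3 hx.
have [_ _ /incr_upto_min_gap[g g0 hg]] := proj1 fine_a.
near=> n.
have n0 : (0 < n)%N by near: n; exists 1%N.
have ng : (2%:R ^+ n)^-1 < g.
  by near: n; apply: filterS (near_infty_natSinv_expn_lt (PosNum g0)) => k; rewrite div1r.
have ne : (2%:R ^+ n)^-1 < e / 3%:R.
  by near: n; apply: filterS (near_infty_natSinv_expn_lt (PosNum e3)) => k; rewrite div1r.
have nmax : `|0 - dyadic_max n (fun u => y n u - x u)| <= e / 3%:R.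
  by near: n; exact: cvgr_dist_le _ _ hmax _ e3.
apply: le_trans (dJ1_le_dyadic (hy n n0) (ltW e3) fine_a _) _.
  by move=> i hi; apply: lt_le_trans ng (hg i hi).
rewrite lee_fin; move: nmax; rewrite sub0r normrN => /(le_trans (ler_norm _)) nmax.
lra.
Unshelve. all: by end_near.
Qed.

End Skorokhod.

Theorem mainTheorem7 (R : realType) (d : measure_display) (T : measurableType d)
  (P : probability T R) (X : T -> R -> R) (Xn : nat -> T -> R -> R) :
  (forall t, measurable_fun setT (fun w => X w t)) ->
  (forall n t, measurable_fun setT (fun w => Xn n w t)) ->
  (forall w, cadlag01 (X w)) ->
  (forall n w, cadlag01 (Xn n w)) ->
  (forall n, (0 < n)%N -> forall w (k : nat), (k < 2 ^ n)%N ->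
     forall s t, k%:R / 2%:R ^+ n <= s < k.+1%:R / 2%:R ^+ n ->
                 k%:R / 2%:R ^+ n <= t < k.+1%:R / 2%:R ^+ n ->
                 Xn n w s = Xn n w t) ->
  {ae P, forall w, (fun n => dyadic_max n (fun u => Xn n w u - X w u)) @ \oo --> 0} ->
  {ae P, forall w, (fun n => dJ1 (Xn n w) (X w)) @ \oo --> 0%E}.
Proof.
move=> _ _ hX _ hstep; apply: filterS => w.
exact: dJ1_cvg0_dyadic (hX w) (fun n n0 => hstep n n0 w).
Qed.
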